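(* Let $n\ge 2$, let $\epsilon\in(0,1)$, let $Q^0$ be a probability distribution on $n$ categories with $Q^0_i>0$ for all $i$, and let $\widehat{P}$ be a fixed probability vector in $\mathbb{S}^n$ (not varying with $p$). Take $\mathcal{Q}=\{Q^0\}$, and for each $p$ let $\alpha_{\mathrm{L}}=\alpha_{\mathrm{L}}(p)$ be as defined below. Then, as $p\to\infty$, $$\kappa(\widehat{P}\,\|\,Q^0)-\alpha_{\mathrm{L}}=O\left(\sqrt{\frac{\log p}{p}}\right).$$
   Context: $\mathbb{S}^n=\{P\in\mathbb{R}^n:\sum_iP_i=1,\ P_i\ge0\}$. $D(P\|Q)=\sum_iP_i\log(P_i/Q_i)$. The separation distance is $\kappa(P\|Q)=\max_{i\in[n]}\left(1-\frac{P_i}{Q_i}\right)$. For $\alpha\in[0,1]$ let $\mathcal{P}(\widehat{P},\alpha)=\{P\in\mathbb{S}^n: P_i\le \widehat{P}_i/(1-\alpha),\ i=1,\dots,n\}$ (the set of distributions obtainable by discarding a fraction $\alpha$ of the mass of $\widehat{P}$), and let $D^*_\alpha=\min_{P\in\mathcal{P}(\widehat{P},\alpha),\,Q\in\mathcal{Q}}D(P\|Q)$, which for $\mathcal{Q}=\{Q^0\}$ is $\min_{P\in\mathcal{P}(\widehat{P},\alpha)}D(P\|Q^0)$. Define $$\alpha_{\mathrm{L}}=\max\left\{\alpha:\ D^*_\alpha\ \ge\ \frac{1}{p(1-\alpha)}\log\left(\frac1\epsilon\right)+\frac{2n}{p(1-\alpha)}\log\big(p(1-\alpha)+1\big)\right\}.$$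 *)

From mathcomp Require Import all_boot all_order all_algebra.
From mathcomp Require Import all_classical all_reals all_analysis.
Unset Strict Implicit. Unset Printing Implicit Defensive.
Import Order.TTheory GRing.Theory Num.Theory.
Local Open Scope classical_set_scope.
Local Open Scope ring_scope.

Section Defs.
Variable R : realType.

Definition simplex (n : nat) : set ('I_n -> R) :=
  [set P | (forall i, 0 <= P i) /\ \sum_(i < n) P i = 1].

(* KL divergence D(P||Q) = sum_i P_i log(P_i/Q_i) (natural log; ln 0 = 0 so 0 log 0 = 0) *)
Definition KL (n : nat) (P Q : 'I_n -> R) : R :=
  \sum_(i < n) P i * ln (P i / Q i).

Definition kappa (n : nat) (P Q : 'I_n -> R) : R :=
  sup (range (fun i : 'I_n => 1 - P i / Q i)).

Definition Pset (n : nat) (Phat : 'I_n -> R) (alpha : R) : set ('I_n -> R) :=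
  [set P | simplex n P /\ forall i, P i <= Phat i / (1 - alpha)].

Definition Dstar (n : nat) (Phat Q0 : 'I_n -> R) (alpha : R) : R :=
  inf [set KL n P Q0 | P in Pset n Phat alpha].

Definition alphaL (n : nat) (eps : R) (Phat Q0 : 'I_n -> R) (p : R) : R :=
  sup [set alpha | 0 <= alpha < 1 /\
        ln (1 / eps) / (p * (1 - alpha))
          + (2 * n%:R) / (p * (1 - alpha)) * ln (p * (1 - alpha) + 1)
        <= Dstar n Phat Q0 alpha].

End Defs.

From mathcomp Require Import all_boot all_order all_algebra.
From mathcomp Require Import all_classical all_reals all_analysis.
From mathcomp Require Import ring lra.
Import Order.TTheory GRing.Theory Num.Theory.
Local Open Scope classical_set_scope.
Local Open Scope ring_scope.

(* Let i attain kappa = k, so that Phat_i = Q0_i (1 - k).  Keeping only the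
   fraction 1 - alpha of the mass forces P_i <= Q0_i (1 - d) with
   d = (k - alpha) / (1 - alpha) for every admissible P, and the squared
   Hellinger distance, a lower bound for the KL divergence, then gives
   D*_alpha >= Q0_i d^2 / 4.  The threshold defining alpha_L is
   O(log p / p), so alpha = k - C sqrt (log p / p) satisfies it for a
   suitable C.  Conversely every admissible alpha is < k, because
   D*_alpha = 0 once alpha >= k while the threshold is positive. *)

Section Divergence.
Context {R : realType} {n : nat}.
Implicit Types (P Q : 'I_n -> R).

Definition sq_hellinger P Q : R :=
  \sum_(i < n) (Num.sqrt (P i) - Num.sqrt (Q i)) ^+ 2.

Lemma sqr_mul_ln_ratio_ge (s t : R) : 0 <= s -> 0 < t ->
  2 * s ^+ 2 - 2 * (s * t) <= s ^+ 2 * ln (s ^+ 2 / t ^+ 2).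
Proof.
move=> s_ge0 t_gt0; have [->|s_neq0] := eqVneq s 0.
  by rewrite expr0n /= !mul0r mulr0 subrr.
have s_gt0 : 0 < s by rewrite lt_def s_neq0 s_ge0.
have ts_gt0 : 0 < t / s by rewrite divr_gt0.
have ln_ts : ln (t / s) <= t / s - 1.
  by have := @le_ln1Dx R (t / s - 1); rewrite addrCA subrr addr0; apply; lra.
have key : s ^+ 2 * ln (t / s) <= s * t - s ^+ 2.
  have -> : s * t - s ^+ 2 = s ^+ 2 * (t / s - 1) by field.
  by rewrite ler_wpM2l ?exprn_ge0.
have -> : s ^+ 2 / t ^+ 2 = ((t / s) ^+ 2)^-1 by rewrite expr_div_n invf_div.
rewrite lnV ?posrE ?exprn_gt0 // lnXn // mulrN -mulr_natr; lra.
Qed.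

Lemma sq_hellinger_le_KL P Q : simplex R n P -> simplex R n Q ->
  (forall i, 0 < Q i) -> sq_hellinger P Q <= KL R n P Q.
Proof.
move=> [P_ge0 P_sum1] [_ Q_sum1] Q_gt0.
have -> : sq_hellinger P Q =
    \sum_(i < n) (2 * P i - 2 * (Num.sqrt (P i) * Num.sqrt (Q i))).
  apply/eqP; rewrite -subr_eq0 -sumrB.
  rewrite (eq_bigr (fun i => Q i - P i)); last first.
    by move=> i _; rewrite sqrrB !sqr_sqrtr ?P_ge0 ?ltW //; ring.
  by rewrite sumrB P_sum1 Q_sum1 subrr.
apply: ler_sum => i _.
have sQ_gt0 : 0 < Num.sqrt (Q i) by rewrite sqrtr_gt0.
have := @sqr_mul_ln_ratio_ge _ _ (sqrtr_ge0 (P i)) sQ_gt0.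
by rewrite !sqr_sqrtr ?P_ge0 // ltW.
Qed.

Lemma KL_ge0 P Q : simplex R n P -> simplex R n Q ->
  (forall i, 0 < Q i) -> 0 <= KL R n P Q.
Proof.
move=> hP hQ Q_gt0; apply: le_trans _ (sq_hellinger_le_KL P Q hP hQ Q_gt0).
by apply: sumr_ge0 => i _; rewrite sqr_ge0.
Qed.

Lemma KL_id Q : (forall i, 0 < Q i) -> KL R n Q Q = 0.
Proof.
by move=> Q_gt0; rewrite /KL big1 // => i _; rewrite divff ?ln1 ?mulr0 ?gt_eqF.
Qed.

Lemma KL_ge_mass_deficit P Q (i : 'I_n) (d : R) :
  simplex R n P -> simplex R n Q -> (forall j, 0 < Q j) -> 0 <= d <= 1 ->
  P i <= Q i * (1 - d) -> Q i * d ^+ 2 / 4 <= KL R n P Q.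
Proof.
move=> hP hQ Q_gt0 /andP[d_ge0 d_le1] Pi_le.
apply: le_trans _ (sq_hellinger_le_KL P Q hP hQ Q_gt0).
rewrite /sq_hellinger (bigD1 i) //=.
set s := Num.sqrt (P i); set t := Num.sqrt (Q i).
apply: (@le_trans _ _ ((s - t) ^+ 2)); last first.
  by rewrite lerDl sumr_ge0 // => j _; rewrite sqr_ge0.
have s_ge0 : 0 <= s by apply: sqrtr_ge0.
have t_gt0 : 0 < t by rewrite sqrtr_gt0.
have sE : s ^+ 2 = P i by rewrite sqr_sqrtr // hP.1.
have tE : t ^+ 2 = Q i by rewrite sqr_sqrtr // ltW.
(* (1 - d/2)^2 >= 1 - d turns the mass deficit into a deficit of square roots *)
have sq_le : s ^+ 2 <= (t * (1 - d / 2)) ^+ 2.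
  rewrite sE; apply: le_trans Pi_le _; rewrite -tE -subr_ge0.
  have -> : (t * (1 - d / 2)) ^+ 2 - t ^+ 2 * (1 - d) = (t * d / 2) ^+ 2 by field.
  exact: sqr_ge0.
have u_ge0 : 0 <= t * (1 - d / 2) by rewrite mulr_ge0 ?ltW //; lra.
have s_le : s <= t * (1 - d / 2) by move: sq_le; rewrite ler_pXn2r // ?nnegrE.
rewrite -tE; nra.
Qed.

End Divergence.

Section SeparationDistance.
Context {R : realType} {n : nat}.
Variables (Phat Q0 : 'I_n -> R).
Hypotheses (n_gt0 : (0 < n)%N) (hPhat : simplex R n Phat) (hQ0 : simplex R n Q0).
Hypothesis Q0_gt0 : forall i, 0 < Q0 i.

Lemma kappa_attained : exists2 i : 'I_n,
  kappa R n Phat Q0 = 1 - Phat i / Q0 i &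
  forall j, 1 - Phat j / Q0 j <= 1 - Phat i / Q0 i.
Proof.
pose f i := 1 - Phat i / Q0 i.
have [i _ f_max] := @arg_maxP _ R _ (Ordinal n_gt0) xpredT f isT.
exists i => [|j]; last exact: f_max.
apply/eqP; rewrite eq_le; apply/andP; split.
- by apply: ge_sup => [|_ [j _ <-]]; [exists (f i), i | exact: f_max].
- by apply: ub_le_sup; [exists (f i) => _ [j _ <-]; exact: f_max | exists i].
Qed.

Lemma kappa_ge0 : 0 <= kappa R n Phat Q0.
Proof.
have [i -> f_max] := kappa_attained.
have <- : \sum_(j < n) Q0 j * (1 - Phat j / Q0 j) = 0.
  rewrite (eq_bigr (fun j => Q0 j - Phat j)); last first.
    by move=> j _; field; rewrite gt_eqF.
  by rewrite sumrB hQ0.2 hPhat.2 subrr.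
apply: (@le_trans _ _ (\sum_(j < n) Q0 j * (1 - Phat i / Q0 i))).
  by apply: ler_sum => j _; apply: ler_wpM2l; [exact: hQ0.1 | exact: f_max].
by rewrite -mulr_suml hQ0.2 mul1r.
Qed.

Lemma Dstar_le0 (alpha : R) :
  kappa R n Phat Q0 <= alpha < 1 -> Dstar R n Phat Q0 alpha <= 0.
Proof.
case/andP=> kappa_le alpha_lt1.
have [i kappaE f_max] := kappa_attained.
rewrite -(KL_id Q0 Q0_gt0); apply: ge_inf.
  by exists 0 => _ [P [hP _] <-]; exact: KL_ge0.
exists Q0 => //; split => // j.
rewrite ler_pdivlMr ?subr_gt0 // mulrC -ler_pdivlMr //.
by have := f_max j; rewrite -kappaE; lra.
Qed.

Lemma Dstar_ge (alpha : R) (i : 'I_n) : 0 <= alpha < 1 ->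
  Phat i <= Q0 i * (1 - alpha) ->
  Q0 i * (1 - Phat i / (Q0 i * (1 - alpha))) ^+ 2 / 4 <= Dstar R n Phat Q0 alpha.
Proof.
case/andP=> alpha_ge0 alpha_lt1 Phat_i_le.
have w_gt0 : 0 < 1 - alpha by rewrite subr_gt0.
have qw_gt0 : 0 < Q0 i * (1 - alpha) by rewrite mulr_gt0.
apply: lb_le_inf.
  exists (KL R n Phat Q0), Phat => //; split => // j.
  by rewrite ler_pdivlMr //; have := hPhat.1 j; nra.
move=> _ [P [hP P_le] <-].
apply: KL_ge_mass_deficit hP hQ0 Q0_gt0 _ _.
  by rewrite subr_ge0 ler_pdivrMr // mul1r Phat_i_le lerBlDr lerDl divr_ge0 ?hPhat.1 ?ltW.
have -> : Q0 i * (1 - (1 - Phat i / (Q0 i * (1 - alpha)))) = Phat i / (1 - alpha).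
  by field; rewrite !gt_eqF.
exact: P_le.
Qed.

End SeparationDistance.

Section AlphaL.
Context {R : realType} {n : nat}.
Variables (eps : R) (Phat Q0 : 'I_n -> R).
Hypotheses (n_gt0 : (0 < n)%N) (heps : 0 < eps < 1).
Hypotheses (hPhat : simplex R n Phat) (hQ0 : simplex R n Q0).
Hypothesis Q0_gt0 : forall i, 0 < Q0 i.

Definition alphaL_threshold (p alpha : R) : R :=
  ln (1 / eps) / (p * (1 - alpha))
    + (2 * n%:R) / (p * (1 - alpha)) * ln (p * (1 - alpha) + 1).

Local Notation admissible p :=
  [set alpha | 0 <= alpha < 1 /\ alphaL_threshold p alpha <= Dstar R n Phat Q0 alpha].

Lemma ln_inv_eps_gt0 : 0 < ln (1 / eps).
Proof. by case/andP: heps => eps_gt0 eps_lt1; rewrite ln_gt0 // div1r invf_gt1. Qed.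

Lemma alphaL_threshold_gt0 (p alpha : R) : 0 < p -> alpha < 1 ->
  0 < alphaL_threshold p alpha.
Proof.
move=> p_gt0 alpha_lt1; have pw_gt0 : 0 < p * (1 - alpha) by rewrite mulr_gt0 ?subr_gt0.
have : 0 < ln (1 / eps) / (p * (1 - alpha)) by rewrite divr_gt0 ?ln_inv_eps_gt0.
have : 0 <= 2 * n%:R / (p * (1 - alpha)) * ln (p * (1 - alpha) + 1).
  apply: mulr_ge0; first by rewrite divr_ge0 ?(ltW pw_gt0) // mulr_ge0.
  by rewrite ln_ge0 // lerDr ltW.
rewrite /alphaL_threshold; lra.
Qed.

Lemma alphaL_threshold_le_ln (p alpha : R) : expR 1 <= p -> 0 <= alpha < 1 ->
  alphaL_threshold p alpha * (p * (1 - alpha)) <= (ln (1 / eps) + 4 * n%:R) * ln p.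
Proof.
move=> p_ge_e /andP[alpha_ge0 alpha_lt1].
have p_ge2 : 2 <= p by have := expR_ge1Dx (1 : R); lra.
have w_gt0 : 0 < 1 - alpha by rewrite subr_gt0.
have lnp_ge1 : 1 <= ln p by rewrite -(expRK 1) ler_ln ?posrE ?expR_gt0 //; lra.
have ln_le : ln (p * (1 - alpha) + 1) <= 2 * ln p.
  rewrite mulr_natl -lnXn; last lra.
  rewrite ler_ln ?posrE ?exprn_gt0 //; nra.
have -> : alphaL_threshold p alpha * (p * (1 - alpha))
    = ln (1 / eps) + 2 * n%:R * ln (p * (1 - alpha) + 1).
  by rewrite /alphaL_threshold; field; rewrite !gt_eqF //; lra.
have := ln_inv_eps_gt0; have : 0 <= n%:R :> R by [].
nra.
Qed.

Lemma le_alphaL (p alpha : R) : admissible p alpha -> alpha <= alphaL R n eps Phat Q0 p.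
Proof. by apply: ub_le_sup; exists 1 => b [/andP[_ /ltW]]. Qed.

Lemma alphaL_ge0 (p : R) : 0 <= alphaL R n eps Phat Q0 p.
Proof.
have [[alpha alpha_adm]|S0] := pselect (admissible p !=set0); last first.
  by rewrite /alphaL sup_out // => -[].
by apply: le_trans _ (le_alphaL p alpha alpha_adm); case: alpha_adm => /andP[].
Qed.

Lemma alphaL_le_kappa (p : R) : 0 < p -> alphaL R n eps Phat Q0 p <= kappa R n Phat Q0.
Proof.
move=> p_gt0.
have [S_neq0|S0] := pselect (admissible p !=set0); last first.
  by rewrite /alphaL sup_out; [exact: kappa_ge0 | case].
apply: ge_sup => // alpha [/andP[alpha_ge0 alpha_lt1] alpha_thr].
rewrite leNgt; apply/negP => kappa_lt.
have : Dstar R n Phat Q0 alpha <= 0.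
  by apply: Dstar_le0 => //; rewrite (ltW kappa_lt) alpha_lt1.
have := alphaL_threshold_gt0 p alpha p_gt0 alpha_lt1; rewrite /alphaL_threshold; lra.
Qed.

Lemma kappa_sub_alphaL_le (i : 'I_n) (p : R) :
  kappa R n Phat Q0 = 1 - Phat i / Q0 i -> expR 1 <= p ->
  kappa R n Phat Q0 - alphaL R n eps Phat Q0 p
    <= Num.sqrt (4 * (ln (1 / eps) + 4 * n%:R) / Q0 i) * Num.sqrt (ln p / p).
Proof.
move=> kappaE p_ge_e.
set k := kappa _ _ _ _; set q := Q0 i; set c := ln (1 / eps) + 4 * n%:R.
set dl := _ * _.
have p_gt0 : 0 < p by apply: lt_le_trans p_ge_e; rewrite expR_gt0.
have lnp_ge1 : 1 <= ln p by rewrite -(expRK 1) ler_ln ?posrE ?expR_gt0.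
have q_gt0 : 0 < q := Q0_gt0 i.
have c_gt0 : 0 < c.
  by have := ln_inv_eps_gt0; have : 0 <= n%:R :> R by []; rewrite /c; lra.
have dl_gt0 : 0 < dl.
  by rewrite mulr_gt0 // !sqrtr_gt0 !divr_gt0 // ?mulr_gt0 //; lra.
have dl2 : dl ^+ 2 = 4 * c / q * (ln p / p).
  by rewrite exprMn !sqr_sqrtr // divr_ge0 //; lra.
have [k_le_dl|dl_lt_k] := leP k dl; first by have := alphaL_ge0 p; lra.
have k_le1 : k <= 1 by rewrite /k kappaE lerBlDr lerDl divr_ge0 ?hPhat.1 ?ltW.
have PhatE : Phat i = q * (1 - k) by rewrite /k kappaE /q; field; rewrite gt_eqF.
pose alpha := k - dl.
have w_gt0 : 0 < 1 - alpha by rewrite /alpha; lra.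
have alpha_range : 0 <= alpha < 1 by apply/andP; rewrite /alpha; lra.
suff : admissible p alpha by move/le_alphaL; rewrite /alpha; lra.
have Phat_i_le : Phat i <= q * (1 - alpha) by rewrite PhatE ler_pM2l // /alpha; lra.
split=> //; apply: le_trans _ (Dstar_ge Phat Q0 hPhat hQ0 Q0_gt0 alpha i alpha_range Phat_i_le).
have dE : 1 - Phat i / (q * (1 - alpha)) = dl / (1 - alpha).
  by rewrite PhatE /alpha; field; rewrite !gt_eqF //; lra.
have pw_gt0 : 0 < p * (1 - alpha) by rewrite mulr_gt0.
rewrite dE -(ler_pM2r pw_gt0).
apply: le_trans (alphaL_threshold_le_ln p alpha p_ge_e alpha_range) _.
have -> : q * (dl / (1 - alpha)) ^+ 2 / 4 * (p * (1 - alpha)) = c * ln p / (1 - alpha).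
  by rewrite expr_div_n dl2; field; rewrite !gt_eqF.
have cL_ge0 : 0 <= c * ln p by apply: mulr_ge0; [exact: ltW | lra].
have /andP[alpha_ge0 _] := alpha_range.
rewrite -/c ler_pdivlMr //; nra.
Qed.

End AlphaL.

Theorem theorem2 (R : realType) (n : nat) (hn : (2 <= n)%N) (eps : R)
    (heps : 0 < eps < 1) (Q0 : 'I_n -> R) (hQ0 : @simplex R n Q0)
    (hQ0pos : forall i, 0 < Q0 i) (Phat : 'I_n -> R) (hPhat : @simplex R n Phat) :
  exists C : R, exists p0 : R, forall p : R, p0 <= p ->
    `| @kappa R n Phat Q0 - @alphaL R n eps Phat Q0 p | <= C * Num.sqrt (ln p / p).
Proof.
have n_gt0 : (0 < n)%N by exact: leq_trans hn.
have [i kappaE _] := kappa_attained Phat Q0 n_gt0.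
exists (Num.sqrt (4 * (ln (1 / eps) + 4 * n%:R) / Q0 i)), (expR 1) => p p_ge_e.
have p_gt0 : 0 < p by apply: lt_le_trans p_ge_e; rewrite expR_gt0.
have alphaL_le : alphaL R n eps Phat Q0 p <= kappa R n Phat Q0.
  exact: alphaL_le_kappa.
by rewrite ger0_norm ?subr_ge0 //; apply: kappa_sub_alphaL_le.
Qed.
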